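(* Let $\varphi(x,y)$ be a formula in the language of $\mathbf{A}^{\natural}$ and let $a\in A$. Then $\varphi(a^1,a^3)\in A_1\cup A_3\cup A_4$ if and only if $\varphi$ has the tree property.
   Context: $\mathbf{A}$ is a fixed non-trivial algebra whose set $\mathcal{F}$ of basic operations contains no constant symbols, and $h$ is a unary function on $A$. Construction of $\mathbf{A}^{\natural}$: universe is the disjoint union of eight copies $A_1,\dots,A_8$ of $A$ ($a^i$ is the copy of $a$ in $A_i$); operations: each $n$-ary $f\in\mathcal{F}$ with $f(a_1^{m_1},\dots,a_n^{m_n})=(f^{\mathbf{A}}(a_1,\dots,a_n))^5$; a ternary $\heartsuit$ with $\heartsuit(a^m,b^n,c^k)=a^1$ if $a^m=c^k$, $h(a)^5=b^n$, $m\in\{1,3,4\}$; $=a^2$ if $a^m=c^k$, $h(a)^5=b^n$, $m\in\{2,5,6,7,8\}$; $=a^4$ if $m,k\in\{1,3,4\}$ and ($a^m\ne c^k$ or $h(a)^5\ne b^n$); $=a^7$ if $\{m,k\}\cap\{2,5,6,7,8\}\ne\emptyset$ and ($a^m\ne c^k$ or $h(a)^5\ne b^n$); a unary $\Box$ with $\Box(a^m)=a^m$ for $m\in\{1,2\}$, $a^{m-1}$ for even $m\ge3$, $a^{m+1}$ for odd $m\ge3$. Subformula tree of a formula $\varphi$ (recursively): for a variable $x$, the one-node tree labelled $x$; for $\varphi=g(\psi_1,\dots,\psi_n)$ with $g$ a basic symbol, take the disjoint union of the subformula trees of $\psi_1,\dots,\psi_n$, relabel the root of the tree of $\psi_i$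 by $\langle\psi_i,i\rangle$, and add a common new root labelled $\varphi$. A formula $\varphi$ has the tree property if every node of its subformula tree whose label is a formula with principal symbol in $\mathcal{F}$ (possibly paired with a natural number) is either equal to or has as an ancestor a node labelled $\langle\beta,2\rangle$ whose immediate predecessor (parent) is labelled $\heartsuit(\alpha,\beta,\gamma)$ or $\langle\heartsuit(\alpha,\beta,\gamma),n\rangle$ for some $n$. *)

From mathcomp Require Import all_boot.
Set Implicit Arguments. Unset Strict Implicit. Unset Printing Implicit Defensive.

Inductive copy := C1 | C2 | C3 | C4 | C5 | C6 | C7 | C8.

Definition copy_nat (m : copy) : nat :=
  match m with C1 => 1 | C2 => 2 | C3 => 3 | C4 => 4
             | C5 => 5 | C6 => 6 | C7 => 7 | C8 => 8 end.

Definition in134 (m : copy) : bool :=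
  match m with C1 | C3 | C4 => true | _ => false end.

Section Natural.
Variables (A : eqType) (Fsym : Type) (ar : Fsym -> nat).
Variable fA : forall f : Fsym, ('I_(ar f) -> A) -> A.
Variable h : A -> A.

(* Universe of A^natural: the element a^m is the pair (m, a). *)
Definition nat_carrier := (copy * A)%type.

Definition heart (u v w : nat_carrier) : nat_carrier :=
  let: (m, a) := u in let: (n, b) := v in let: (k, c) := w in
  let cond := [&& a == c, copy_nat m == copy_nat k,
                  h a == b & copy_nat n == 5] in
  if cond then (if in134 m then (C1, a) else (C2, a))
  else if in134 m && in134 k then (C4, a) else (C7, a).

Definition box (u : nat_carrier) : nat_carrier :=
  let: (m, a) := u in
  match m with
  | C1 => (C1, a) | C2 => (C2, a)
  | C3 => (C4, a) | C4 => (C3, a)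
  | C5 => (C6, a) | C6 => (C5, a)
  | C7 => (C8, a) | C8 => (C7, a)
  end.

Definition fnat (f : Fsym) (args : 'I_(ar f) -> nat_carrier) : nat_carrier :=
  (C5, fA (fun i => (args i).2)).

End Natural.

(* Formulas (terms) phi(x,y) of the language of A^natural in variables x, y. *)
Inductive term (Fsym : Type) (ar : Fsym -> nat) : Type :=
| VarX : term ar
| VarY : term ar
| OpF  : forall f : Fsym, ('I_(ar f) -> term ar) -> term ar
| Heart : term ar -> term ar -> term ar -> term ar
| Box  : term ar -> term ar.
Arguments VarX {Fsym ar}. Arguments VarY {Fsym ar}.

Fixpoint eval (A : eqType) (Fsym : Type) (ar : Fsym -> nat)
  (fA : forall f : Fsym, ('I_(ar f) -> A) -> A) (h : A -> A)
  (x y : nat_carrier A) (t : term ar) : nat_carrier A :=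
  match t with
  | VarX => x
  | VarY => y
  | OpF f args => fnat fA (fun i => eval fA h x y (args i))
  | Heart t1 t2 t3 => heart h (eval fA h x y t1) (eval fA h x y t2) (eval fA h x y t3)
  | Box t1 => box (eval fA h x y t1)
  end.

(* Nodes of the subformula tree are addressed by paths: lists of 1-based
   child indices (the node labelled <psi_i, i> is the i-th child).
   [subterm_at t p] is the formula labelling the node at path p. *)
Fixpoint subterm_at (Fsym : Type) (ar : Fsym -> nat) (t : term ar) (p : seq nat)
  : option (term ar) :=
  match p with
  | [::] => Some t
  | i :: p' =>
    match t with
    | VarX | VarY => None
    | OpF f args =>
        if 0 < i then
          match @insub nat (fun j => j < ar f) _ i.-1 with
          | Some j => subterm_at (args j) p'
          | None => None
          end
        else None
    | Heart t1 t2 t3 =>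
        match i with
        | 1 => subterm_at t1 p' | 2 => subterm_at t2 p' | 3 => subterm_at t3 p'
        | _ => None
        end
    | Box t1 => if i == 1 then subterm_at t1 p' else None
    end
  end.

Definition F_headed (Fsym : Type) (ar : Fsym -> nat) (t : term ar) : Prop :=
  match t with OpF _ _ => True | _ => False end.

Definition heart_headed (Fsym : Type) (ar : Fsym -> nat) (t : term ar) : Prop :=
  match t with Heart _ _ _ => True | _ => False end.

(* Tree property: every node whose formula has principal symbol in F is equal
   to, or has as an ancestor, a node labelled <beta,2> (i.e. second child,
   path q ++ [:: 2]) whose parent (path q) is labelled by a heart-formula. *)
Definition tree_property (Fsym : Type) (ar : Fsym -> nat) (phi : term ar) : Prop :=
  forall (p : seq nat) (s : term ar),
    subterm_at phi p = Some s -> F_headed s ->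
    exists (q r : seq nat) (hq : term ar),
      p = q ++ 2 :: r /\ subterm_at phi q = Some hq /\ heart_headed hq.

From mathcomp Require Import all_boot.

(* The copies A_1, A_3, A_4 are closed under [box], and [heart u v w] lands in
   one of them exactly when [u] and [w] do; the value of [v] only decides
   between A_1/A_2 and A_4/A_7. Operations of F always land in A_5. Hence,
   starting from x, y in A_1 u A_3 u A_4, the value of a formula lies there
   iff no F-symbol occurs outside the middle argument of a heart, which is
   what the tree property says. *)

Lemma in134_heart (A : eqType) (h : A -> A) (u v w : nat_carrier A) :
  in134 (heart h u v w).1 = in134 u.1 && in134 w.1.
Proof.
case: u => m a; case: v => n b; case: w => k c; rewrite /heart.
by case: m; case: k => /=; rewrite ?andbF //; case: ifP.
Qed.

Lemma in134_box (A : eqType) (u : nat_carrier A) :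
  in134 (box u).1 = in134 u.1.
Proof. by case: u => [[]]. Qed.

Section TreeProperty.
Variables (Fsym : Type) (ar : Fsym -> nat).
Implicit Types (t c : term ar) (p : seq nat).

Fixpoint heart_guarded t : bool :=
  match t with
  | VarX | VarY => true
  | OpF _ _ => false
  | Heart t1 _ t3 => heart_guarded t1 && heart_guarded t3
  | Box t1 => heart_guarded t1
  end.

Definition guarded_at t p : Prop :=
  exists (q r : seq nat) (hq : term ar),
    p = q ++ 2 :: r /\ subterm_at t q = Some hq /\ heart_headed hq.

Lemma tree_propertyE t :
  tree_property t <->
  forall p s, subterm_at t p = Some s -> F_headed s -> guarded_at t p.
Proof. by []. Qed.

Lemma guarded_at_child t i c p :
  i != 2 -> (forall p', subterm_at t (i :: p') = subterm_at c p') ->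
  guarded_at t (i :: p) <-> guarded_at c p.
Proof.
move=> i_neq2 tc; split.
- case=> [[|j q] [r [hq [/= p_eq [tq heart_hq]]]]].
    by case: p_eq i_neq2 => ->.
  case: p_eq tq => <- -> tq; rewrite tc in tq; by exists q, r, hq.
- case=> [q [r [hq [-> [cq heart_hq]]]]].
  by exists (i :: q), r, hq; rewrite tc.
Qed.

Lemma tree_property_child t i c :
  i != 2 -> (forall p', subterm_at t (i :: p') = subterm_at c p') ->
  tree_property t -> tree_property c.
Proof.
move=> i_neq2 tc /tree_propertyE tP p s cp Fs.
by apply: (guarded_at_child _ _ _ p i_neq2 tc).1; apply: tP Fs; rewrite tc.
Qed.

Lemma tree_propertyP t : reflect (tree_property t) (heart_guarded t).
Proof.
apply: (iffP idP).
- elim: t => [| |f args _|t1 IH1 t2 _ t3 IH3|t1 IH1] //=.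
  + by move=> _ [|i p] s //= [<-].
  + by move=> _ [|i p] s //= [<-].
  + move=> /andP[/IH1 tP1 /IH3 tP3].
    apply/tree_propertyE => -[|[|[|[|[|i]]]] p] s //=.
    * by move=> [<-].
    * move=> sp Fs; apply/(guarded_at_child _ 1 t1 p isT) => //.
      exact: tP1 sp Fs.
    * by move=> _ _; exists [::], p, (Heart t1 t2 t3).
    * move=> sp Fs; apply/(guarded_at_child _ 3 t3 p isT) => //.
      exact: tP3 sp Fs.
  + move=> /IH1 tP; apply/tree_propertyE => -[|i p] s /=; first by move=> [<-].
    case: eqP => // -> sp Fs.
    by apply/(guarded_at_child _ 1 t1 p isT) => //; apply: tP sp Fs.
- elim: t => [| |f args _|t1 IH1 t2 _ t3 IH3|t1 IH1] //=.
  + by move=> tP; have [[|? ?] [? [? []]]] := tP [::] _ erefl I.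
  + move=> tP; apply/andP; split.
      by apply/IH1; apply: (tree_property_child _ 1 t1) tP.
    by apply/IH3; apply: (tree_property_child _ 3 t3) tP.
  + by move=> tP; apply/IH1; apply: (tree_property_child _ 1 t1) tP.
Qed.

Lemma in134_eval (A : eqType)
    (fA : forall f : Fsym, ('I_(ar f) -> A) -> A) (h : A -> A)
    (x y : nat_carrier A) t :
  in134 x.1 -> in134 y.1 -> in134 (eval fA h x y t).1 = heart_guarded t.
Proof.
move=> x134 y134.
elim: t => [| |f args _|t1 IH1 t2 _ t3 IH3|t1 IH1] //=.
- by rewrite in134_heart IH1 IH3.
- by rewrite in134_box.
Qed.

End TreeProperty.

Theorem lemma6p4 (A : eqType) (Fsym : Type) (ar : Fsym -> nat)
    (fA : forall f : Fsym, ('I_(ar f) -> A) -> A) (h : A -> A)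
    (A_nontrivial : exists a b : A, a <> b)
    (no_constants : forall f : Fsym, 0 < ar f)
    (phi : term ar) (a : A) :
  in134 (eval fA h (C1, a) (C3, a) phi).1 <-> tree_property phi.
Proof.
by rewrite in134_eval //; split => /tree_propertyP.
Qed.
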